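(* Let $m\ge2$ be an integer and let $g\in C^\infty(\mathbb{R})$ with $g(0)>0$. Let $\tilde g\in C^\infty(\mathbb{R})$ satisfy, for some $0<\delta<1$: $\tilde g(x)=g(x)$ for $|x|\le\delta$, $\tilde g(x)=\frac9{10}g(0)$ for $|x|\ge1$, and $0\le -x\tilde g'(x)<\frac15 g(0)$, $|x^2\tilde g''(x)|<\frac15g(0)$ for all $x\in\mathbb{R}$; and suppose $\frac9{10}g(0)\le\tilde g\le g(0)$ on $\mathbb{R}$. Put $\hat g=\tilde g/g(0)$ and $p(s,\tilde X)=\hat g(\tilde Xs)s^{2m}-s$. Then there is a function $\alpha\in C^\infty([0,\infty))$ such that for all $\tilde X\ge0$, $$\frac{\partial p}{\partial s}(\alpha(\tilde X),\tilde X)=0\quad\text{and}\quad \alpha_0\le\alpha(\tilde X)\le\alpha_1,$$ where $\alpha_0=(2m)^{-\frac1{2m-1}}$ and $\alpha_1=(\tfrac45\cdot 2m)^{-\frac1{2m-1}}$. *)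

From Stdlib Require Import Reals Lra.
From Coquelicot Require Import Coquelicot.
Open Scope R_scope.

Definition smooth (f : R -> R) : Prop :=
  forall (n : nat) (x : R), ex_derive_n f n x.

(* f is C^infinity on [0, +oo): it is smooth on an open neighbourhood (-eps, +oo)
   of [0, +oo) (equivalently, by Seeley's extension theorem, all one-sided
   derivatives exist and are continuous up to 0). *)
Definition smooth_on_nonneg (f : R -> R) : Prop :=
  exists eps : R, 0 < eps /\ forall (n : nat) (x : R), - eps < x -> ex_derive_n f n x.

Definition ghat (g gt : R -> R) (x : R) : R := gt x / g 0.

Definition pfun (m : nat) (g gt : R -> R) (s X : R) : R :=
  ghat g gt (X * s) * s ^ (2 * m) - s.

Definition alpha0 (m : nat) : R := Rpower (2 * INR m) (- (1 / (2 * INR m - 1))).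
Definition alpha1 (m : nat) : R :=
  Rpower (4 / 5 * (2 * INR m)) (- (1 / (2 * INR m - 1))).

From Stdlib Require Import Reals Lra Lia.
From Coquelicot Require Import Coquelicot.
Open Scope R_scope.

(* Put u = X s.  The equation dp/ds (s, X) = 0 reads s^(2m-1) k(u) = 1 with
   k(u) = u hat g'(u) + 2m hat g(u), and the hypotheses on tilde g place k in
   [(4/5) 2m, 2m].  Hence s = k(u)^(-1/(2m-1)) and X = psi(u) := u k(u)^(1/(2m-1)).
   The bound on x^2 hat g'' makes psi' > 0, and k >= 1 gives |psi(u)| >= |u|, so psi is
   a smooth bijection of R with smooth inverse, and alpha(X) = k(psi^-1(X))^(-1/(2m-1))
   is a smooth critical point whose bounds are those of k.  This works for every m >= 1
   and every real X. *)

Fixpoint derivable_upto (n : nat) (f : R -> R) : Prop :=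
  match n with
  | O => True
  | S n => (forall x, ex_derive f x) /\ derivable_upto n (Derive f)
  end.

Lemma derivable_uptoS n f : derivable_upto (S n) f -> derivable_upto n f.
Proof.
  revert f; induction n as [|n IH]; intros f [Hf Hdf]; simpl; [easy|].
  split; [exact Hf | apply IH, Hdf].
Qed.

Lemma eq_derivable_upto n f g :
  (forall x, f x = g x) -> derivable_upto n f -> derivable_upto n g.
Proof.
  revert f g; induction n as [|n IH]; intros f g Efg Hf; simpl; [easy|].
  destruct Hf as [Hf Hdf]; split.
  - intros x; apply (ex_derive_ext f); auto.
  - apply (IH (Derive f)); auto. intros x; apply Derive_ext; auto.
Qed.

Lemma derivable_upto_const n c : derivable_upto n (fun _ => c).
Proof.
  revert c; induction n as [|n IH]; intros c; simpl; [easy|].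
  split; [intros; apply ex_derive_const|].
  apply (eq_derivable_upto n (fun _ => 0)); [|apply IH].
  intros x; now rewrite Derive_const.
Qed.

Lemma derivable_upto_id n : derivable_upto n (fun x => x).
Proof.
  destruct n as [|n]; simpl; [easy|].
  split; [intros; apply ex_derive_id|].
  apply (eq_derivable_upto n (fun _ => 1)); [|apply derivable_upto_const].
  intros x; now rewrite Derive_id.
Qed.

Lemma derivable_upto_plus n f g :
  derivable_upto n f -> derivable_upto n g -> derivable_upto n (fun x => f x + g x).
Proof.
  revert f g; induction n as [|n IH]; intros f g Hf Hg; simpl; [easy|].
  destruct Hf as [Hf Hdf], Hg as [Hg Hdg].
  split; [intros x; apply (ex_derive_plus f g); auto|].
  apply (eq_derivable_upto n (fun x => Derive f x + Derive g x)); [|auto].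
  intros x; rewrite Derive_plus; auto.
Qed.

Lemma derivable_upto_mult n f g :
  derivable_upto n f -> derivable_upto n g -> derivable_upto n (fun x => f x * g x).
Proof.
  revert f g; induction n as [|n IH]; intros f g Hf Hg; simpl; [easy|].
  pose proof (derivable_uptoS _ _ Hf) as Hf'; pose proof (derivable_uptoS _ _ Hg) as Hg'.
  destruct Hf as [Hf Hdf], Hg as [Hg Hdg].
  split; [intros x; apply (ex_derive_mult f g); auto|].
  apply (eq_derivable_upto n (fun x => Derive f x * g x + f x * Derive g x)).
  - intros x; rewrite Derive_mult; auto.
  - apply derivable_upto_plus; auto.
Qed.

Lemma derivable_upto_comp n f u :
  derivable_upto n f -> derivable_upto n u -> derivable_upto n (fun x => f (u x)).
Proof.
  revert f u; induction n as [|n IH]; intros f u Hf Hu; simpl; [easy|].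
  pose proof (derivable_uptoS _ _ Hu) as Hu'.
  destruct Hf as [Hf Hdf], Hu as [Hu Hdu].
  split; [intros x; apply (ex_derive_comp f u); auto|].
  apply (eq_derivable_upto n (fun x => Derive f (u x) * Derive u x)).
  - intros x; rewrite (Derive_comp f u); auto; ring.
  - apply derivable_upto_mult; auto.
Qed.

Lemma derivable_upto_exp n : derivable_upto n exp.
Proof.
  induction n as [|n IH]; simpl; [easy|].
  split; [intros x; auto_derive; auto|].
  apply (eq_derivable_upto n exp); [|exact IH].
  intros x; symmetry; apply is_derive_unique, is_derive_exp.
Qed.

Lemma derivable_upto_inv n f :
  (forall x, f x <> 0) -> derivable_upto n f -> derivable_upto n (fun x => / f x).
Proof.
  intros Hnz; revert f Hnz; induction n as [|n IH]; intros f Hnz Hf; simpl; [easy|].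
  pose proof (derivable_uptoS _ _ Hf) as Hf'.
  destruct Hf as [Hf Hdf].
  split; [intros x; apply (ex_derive_inv f); auto|].
  apply (eq_derivable_upto n (fun x => - Derive f x * (/ f x * / f x))).
  - intros x; rewrite Derive_inv; auto. field; auto.
  - apply derivable_upto_mult; [|apply derivable_upto_mult; auto].
    apply (eq_derivable_upto n (fun x => -1 * Derive f x)); [intros; ring|].
    apply derivable_upto_mult; auto using derivable_upto_const.
Qed.

Lemma derivable_upto_ln n f :
  (forall x, 0 < f x) -> derivable_upto n f -> derivable_upto n (fun x => ln (f x)).
Proof.
  intros Hpos Hf; destruct n as [|n]; simpl; [easy|].
  pose proof (derivable_uptoS _ _ Hf) as Hf'.
  destruct Hf as [Hf Hdf].
  split; [intros x; auto_derive; auto|].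
  apply (eq_derivable_upto n (fun x => Derive f x * / f x)).
  - intros x; symmetry; apply is_derive_unique.
    auto_derive; [auto | now rewrite Rmult_1_l].
  - apply derivable_upto_mult; auto.
    apply derivable_upto_inv; auto. intros x; apply Rgt_not_eq, Hpos.
Qed.

Lemma Derive_n_Derive f n x : Derive_n (Derive f) n x = Derive_n f (S n) x.
Proof.
  rewrite <- Nat.add_1_r, <- Derive_n_comp.
  apply Derive_n_ext; reflexivity.
Qed.

Lemma smooth_derivable_upto f : smooth f <-> forall n, derivable_upto n f.
Proof.
  split.
  - intros Hf n; revert f Hf; induction n as [|n IH]; intros f Hf; simpl; [easy|].
    split; [exact (Hf 1%nat)|].
    apply IH; intros k x.
    destruct k as [|k]; [exact I|].
    apply (ex_derive_ext (Derive_n f (S k))); [intros t; symmetry; apply Derive_n_Derive|].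
    exact (Hf (S (S k)) x).
  - intros Hf n; revert f Hf; induction n as [|n IH]; intros f Hf x; simpl; [easy|].
    destruct n as [|n]; [exact (proj1 (Hf 1%nat) x)|].
    apply (ex_derive_ext (Derive_n (Derive f) n)); [intros t; apply Derive_n_Derive|].
    apply (IH (Derive f)); intros k; exact (proj2 (Hf (S k))).
Qed.

Lemma eq_smooth f g : (forall x, f x = g x) -> smooth f -> smooth g.
Proof.
  rewrite !smooth_derivable_upto; intros Efg Hf n; exact (eq_derivable_upto n f g Efg (Hf n)).
Qed.

Lemma smooth_const c : smooth (fun _ => c).
Proof. apply smooth_derivable_upto; intros n; apply derivable_upto_const. Qed.

Lemma smooth_id : smooth (fun x => x).
Proof. apply smooth_derivable_upto; intros n; apply derivable_upto_id. Qed.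

Lemma smooth_plus f g : smooth f -> smooth g -> smooth (fun x => f x + g x).
Proof. rewrite !smooth_derivable_upto; intros Hf Hg n; apply derivable_upto_plus; auto. Qed.

Lemma smooth_mult f g : smooth f -> smooth g -> smooth (fun x => f x * g x).
Proof. rewrite !smooth_derivable_upto; intros Hf Hg n; apply derivable_upto_mult; auto. Qed.

Lemma smooth_comp f u : smooth f -> smooth u -> smooth (fun x => f (u x)).
Proof. rewrite !smooth_derivable_upto; intros Hf Hu n; apply derivable_upto_comp; auto. Qed.

Lemma smooth_Rpower f a :
  (forall x, 0 < f x) -> smooth f -> smooth (fun x => Rpower (f x) a).
Proof.
  rewrite !smooth_derivable_upto; intros Hpos Hf n; unfold Rpower.
  apply (derivable_upto_comp n exp); [apply derivable_upto_exp|].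
  apply derivable_upto_mult; [apply derivable_upto_const | apply derivable_upto_ln; auto].
Qed.

Lemma smooth_Derive f : smooth f -> smooth (Derive f).
Proof. rewrite !smooth_derivable_upto; intros Hf n; exact (proj2 (Hf (S n))). Qed.

Section RightInverse.

Variables f g : R -> R.
Hypothesis f_derivable : forall x, ex_derive f x.
Hypothesis Derive_f_pos : forall x, 0 < Derive f x.
Hypothesis f_g : forall X, f (g X) = X.

Lemma increasing_of_Derive_pos x y : x < y -> f x < f y.
Proof.
  intros Hxy; apply (incr_function f m_infty p_infty (Derive f)); simpl; auto.
  - intros t _ _; apply Derive_correct, f_derivable.
  - intros t _ _; apply Derive_f_pos.
Qed.

Lemma right_inverse_le X Y : X <= Y -> g X <= g Y.
Proof.
  intros HXY; destruct (Rle_or_lt (g X) (g Y)) as [Hle|Hlt]; [exact Hle|].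
  apply increasing_of_Derive_pos in Hlt; rewrite !f_g in Hlt; lra.
Qed.

Lemma continuous_right_inverse X : continuity_pt g X.
Proof.
  apply (Ranalysis5.continuity_pt_recip_interv f g (g X - 1) (g X + 1)); [lra | | | | |].
  - intros x y _ Hxy _; apply increasing_of_Derive_pos, Hxy.
  - intros Y _ _; apply f_g.
  - intros Y HY1 HY2; rewrite <- (f_g Y) in HY1, HY2; split.
    + destruct (Rle_or_lt (g X - 1) (g Y)) as [Hle|Hlt]; [exact Hle|].
      apply increasing_of_Derive_pos in Hlt; lra.
    + destruct (Rle_or_lt (g Y) (g X + 1)) as [Hle|Hlt]; [exact Hle|].
      apply increasing_of_Derive_pos in Hlt; lra.
  - intros x _; apply derivable_continuous_pt, ex_derive_Reals_0, f_derivable.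
  - rewrite <- (f_g X) at 2 3; split; apply increasing_of_Derive_pos; lra.
Qed.

Lemma is_derive_right_inverse X : is_derive g X (/ Derive f (g X)).
Proof.
  apply is_derive_Reals.
  assert (Hf : forall x, g (X - 1) <= x <= g (X + 1) -> derivable_pt f x)
    by (intros x _; apply ex_derive_Reals_0, f_derivable).
  assert (HgX : g (X - 1) <= g X <= g (X + 1)) by (split; apply right_inverse_le; lra).
  pose proof (Ranalysis5.derivable_pt_lim_recip_interv f g (X - 1) (X + 1) X Hf
    (continuous_right_inverse X) ltac:(lra) ltac:(lra) HgX (fun Y _ => f_g Y)) as Hg.
  rewrite Derive_Reals in Hg.
  pose proof (Derive_f_pos (g X)) as Hpos.
  rewrite Rdiv_1_l in Hg; apply Hg; lra.
Qed.

Lemma derivable_upto_right_inverse n :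
  (forall n, derivable_upto n f) -> derivable_upto n g.
Proof.
  intros Hf; induction n as [|n IH]; simpl; [easy|].
  split; [intros X; eexists; apply is_derive_right_inverse|].
  apply (eq_derivable_upto n (fun X => / Derive f (g X))).
  - intros X; symmetry; apply is_derive_unique, is_derive_right_inverse.
  - apply (derivable_upto_comp n (fun x => / Derive f x) g); [|exact IH].
    apply derivable_upto_inv; [intros x; apply Rgt_not_eq, Derive_f_pos|].
    exact (proj2 (Hf (S n))).
Qed.

End RightInverse.

Lemma smooth_right_inverse f g :
  smooth f -> (forall x, 0 < Derive f x) -> (forall X, f (g X) = X) -> smooth g.
Proof.
  intros Hf Hpos Hfg; apply smooth_derivable_upto; intros n.
  apply (derivable_upto_right_inverse f); auto; [exact (Hf 1%nat)|].
  apply smooth_derivable_upto, Hf.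
Qed.

Lemma outward_surjective f :
  (forall x, continuous f x) ->
  (forall x, 0 <= x -> x <= f x) -> (forall x, x <= 0 -> f x <= x) ->
  forall X, {x | f x = X}.
Proof.
  intros Hc Hge Hle X.
  destruct (IVT_gen_consistent f (- Rabs X) (Rabs X) X Hc) as [x [_ Hx]]; [|now exists x].
  pose proof (Rabs_pos X); pose proof (Rle_abs X); pose proof (Rle_abs (- X)).
  rewrite Rabs_Ropp in *.
  pose proof (Hle (- Rabs X) ltac:(lra)); pose proof (Hge (Rabs X) ltac:(lra)).
  split.
  - apply Rle_trans with (f (- Rabs X)); [apply Rmin_l | lra].
  - apply Rle_trans with (f (Rabs X)); [lra | apply Rmax_r].
Qed.

Lemma is_derive_mult_Rpower (k : R -> R) (a u : R) :
  ex_derive k u -> 0 < k u ->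
  is_derive (fun v => v * Rpower (k v) a) u (Rpower (k u) a * (1 + a * u * Derive k u / k u)).
Proof.
  intros Hk Hpos; unfold Rpower; auto_derive; [auto|].
  change (Derive (fun x => k x)) with (Derive k); field; lra.
Qed.

Definition crit (m : nat) (h : R -> R) (u : R) : R := u * Derive h u + 2 * INR m * h u.

Lemma Derive_crit_equation (m : nat) (h : R -> R) (X s : R) :
  (0 < m)%nat -> ex_derive h (X * s) ->
  Derive (fun s => h (X * s) * s ^ (2 * m) - s) s = s ^ (2 * m - 1) * crit m h (X * s) - 1.
Proof.
  intros Hm Hh; apply is_derive_unique; unfold crit; auto_derive; [exact Hh|].
  change (Derive (fun x => h x)) with (Derive h).
  replace (m + (m + 0))%nat with (S (2 * m - 1)) by lia.
  rewrite S_INR, minus_INR, mult_INR by lia; simpl; ring.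
Qed.

Section CriticalPoint.

Variables (m : nat) (h : R -> R).
Hypothesis m_pos : (0 < m)%nat.
Hypothesis h_smooth : smooth h.
Hypothesis h_range : forall x, 9 / 10 <= h x <= 1.
Hypothesis h_slope : forall x, - (1 / 5) < x * Derive h x <= 0.
Hypothesis h_curvature : forall x, Rabs (x ^ 2 * Derive_n h 2 x) < 1 / 5.

Let m_ge1 : 1 <= INR m.
Proof. apply (le_INR 1); lia. Qed.

Lemma crit_bounds u : 4 / 5 * (2 * INR m) <= crit m h u <= 2 * INR m.
Proof.
  unfold crit; pose proof (h_range u); pose proof (h_slope u); pose proof m_ge1; nra.
Qed.

Lemma crit_pos u : 0 < crit m h u.
Proof. pose proof (crit_bounds u); pose proof m_ge1; lra. Qed.

Lemma smooth_crit : smooth (crit m h).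
Proof.
  apply smooth_plus; apply smooth_mult; auto using smooth_id, smooth_Derive.
  apply smooth_const.
Qed.

Lemma Derive_crit u :
  Derive (crit m h) u = (2 * INR m + 1) * Derive h u + u * Derive_n h 2 u.
Proof.
  apply is_derive_unique; unfold crit; auto_derive.
  - split; [exact (smooth_Derive h h_smooth 1%nat u) | split; [exact (h_smooth 1%nat u) | easy]].
  - change (Derive (fun x => h x)) with (Derive h).
    change (Derive (fun x => Derive h x)) with (Derive_n h 2). ring.
Qed.

(* The hypotheses on [h] bound this quantity, [4m u h' + 2m (2m - 1) h + u^2 h''],
   from below by [(36 m^2 - 26 m - 2) / 10 > 0]. *)
Lemma crit_growth u : 0 < (2 * INR m - 1) * crit m h u + u * Derive (crit m h) u.
Proof.
  rewrite Derive_crit; unfold crit.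
  pose proof (h_range u); pose proof (h_slope u); pose proof m_ge1.
  pose proof (Rabs_def2 _ _ (h_curvature u)).
  set (M := INR m) in *; set (A := u * Derive h u) in *; set (B := u ^ 2 * Derive_n h 2 u) in *.
  replace ((2 * M - 1) * (A + 2 * M * h u) + u * ((2 * M + 1) * Derive h u + u * Derive_n h 2 u))
    with (4 * M * A + 2 * M * (2 * M - 1) * h u + B) by (unfold A, B; ring).
  nra.
Qed.

(* For [u = X s], [s] is a critical point iff [s = scale u], and then [X = stretch u]. *)
Definition expo : R := 1 / (2 * INR m - 1).
Definition stretch (u : R) : R := u * Rpower (crit m h u) expo.
Definition scale (u : R) : R := Rpower (crit m h u) (- expo).

Lemma expo_pos : 0 < expo.
Proof. unfold expo; pose proof m_ge1; apply Rdiv_lt_0_compat; lra. Qed.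

Lemma smooth_stretch : smooth stretch.
Proof.
  apply smooth_mult; [apply smooth_id|].
  apply smooth_Rpower; [apply crit_pos | apply smooth_crit].
Qed.

Lemma smooth_scale : smooth scale.
Proof. apply smooth_Rpower; [apply crit_pos | apply smooth_crit]. Qed.

Lemma Derive_stretch_pos u : 0 < Derive stretch u.
Proof.
  pose proof (crit_pos u) as Hk; pose proof (crit_growth u) as Hgrowth; pose proof m_ge1.
  rewrite (is_derive_unique stretch u _
    (is_derive_mult_Rpower (crit m h) expo u (smooth_crit 1%nat u) Hk)).
  replace (1 + expo * u * Derive (crit m h) u / crit m h u) with
    (expo * ((2 * INR m - 1) * crit m h u + u * Derive (crit m h) u) / crit m h u)
    by (unfold expo; field; lra).
  apply Rmult_lt_0_compat; [apply exp_pos|].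
  apply Rdiv_lt_0_compat; [apply Rmult_lt_0_compat; [apply expo_pos|]|]; assumption.
Qed.

Lemma one_le_Rpower_crit u : 1 <= Rpower (crit m h u) expo.
Proof.
  rewrite <- (Rpower_O (crit m h u)) by apply crit_pos.
  apply Rle_Rpower; [pose proof (crit_bounds u); pose proof m_ge1; lra|].
  apply Rlt_le, expo_pos.
Qed.

Lemma stretch_ge u : 0 <= u -> u <= stretch u.
Proof. intros Hu; unfold stretch; pose proof (one_le_Rpower_crit u); nra. Qed.

Lemma stretch_le u : u <= 0 -> stretch u <= u.
Proof. intros Hu; unfold stretch; pose proof (one_le_Rpower_crit u); nra. Qed.

Lemma stretch_mul_scale u : stretch u * scale u = u.
Proof.
  unfold stretch, scale; rewrite Rpower_Ropp.
  field; apply Rgt_not_eq; pose proof (one_le_Rpower_crit u); lra.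
Qed.

Lemma scale_pow_crit u : scale u ^ (2 * m - 1) * crit m h u = 1.
Proof.
  pose proof (crit_pos u); pose proof m_ge1.
  unfold scale; rewrite <- Rpower_pow by apply exp_pos.
  rewrite Rpower_mult, minus_INR, mult_INR by lia.
  replace (- expo * (INR 2 * INR m - INR 1)) with (- (1)) by (unfold expo; simpl; field; lra).
  rewrite Rpower_Ropp, Rpower_1 by assumption.
  field; lra.
Qed.

Lemma scale_bounds u : alpha0 m <= scale u <= alpha1 m.
Proof.
  pose proof (crit_bounds u); pose proof (crit_pos u); pose proof m_ge1.
  unfold alpha0, alpha1, scale; fold expo; rewrite !Rpower_Ropp.
  pose proof expo_pos.
  split; apply Rinv_le_contravar; try apply exp_pos; apply Rle_Rpower_l; lra.
Qed.

Theorem smooth_critical_point :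
  exists alpha : R -> R, smooth alpha /\
    forall X, Derive (fun s => h (X * s) * s ^ (2 * m) - s) (alpha X) = 0 /\
      alpha0 m <= alpha X <= alpha1 m.
Proof.
  pose (unstretch := fun X : R => proj1_sig (outward_surjective stretch
    (fun u => ex_derive_continuous stretch u (smooth_stretch 1%nat u)) stretch_ge stretch_le X)).
  assert (stretch_unstretch : forall X, stretch (unstretch X) = X)
    by (intros X; unfold unstretch; destruct outward_surjective; assumption).
  exists (fun X => scale (unstretch X)); split.
  - apply smooth_comp; [apply smooth_scale|].
    apply (smooth_right_inverse stretch); auto using smooth_stretch, Derive_stretch_pos.
  - intros X; split; [|apply scale_bounds].
    set (u := unstretch X).
    assert (HXu : X * scale u = u)
      by (rewrite <- (stretch_unstretch X) at 1; apply stretch_mul_scale).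
    rewrite (Derive_crit_equation m h X (scale u) m_pos (h_smooth 1%nat _)).
    rewrite HXu, scale_pow_crit; ring.
Qed.

End CriticalPoint.

Lemma Derive_n_ghat (g gt : R -> R) (n : nat) (x : R) :
  Derive_n (ghat g gt) n x = Derive_n gt n x / g 0.
Proof.
  unfold ghat; rewrite (Derive_n_ext _ (fun y => / g 0 * gt y)) by (intros; unfold Rdiv; ring).
  rewrite Derive_n_scal_l; unfold Rdiv; ring.
Qed.

Lemma Derive_ghat (g gt : R -> R) (x : R) : Derive (ghat g gt) x = Derive gt x / g 0.
Proof. exact (Derive_n_ghat g gt 1 x). Qed.

Lemma smooth_ghat (g gt : R -> R) : smooth gt -> smooth (ghat g gt).
Proof.
  intros Hgt; apply (eq_smooth (fun x => gt x * / g 0)); [reflexivity|].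
  apply smooth_mult; [exact Hgt | apply smooth_const].
Qed.

Theorem lemma6p6 (m : nat) (g gt : R -> R) (delta : R) :
  (2 <= m)%nat ->
  smooth g -> 0 < g 0 ->
  smooth gt ->
  0 < delta < 1 ->
  (forall x, Rabs x <= delta -> gt x = g x) ->
  (forall x, 1 <= Rabs x -> gt x = 9 / 10 * g 0) ->
  (forall x, 0 <= - x * Derive gt x /\ - x * Derive gt x < 1 / 5 * g 0) ->
  (forall x, Rabs (x ^ 2 * Derive_n gt 2 x) < 1 / 5 * g 0) ->
  (forall x, 9 / 10 * g 0 <= gt x /\ gt x <= g 0) ->
  exists alpha : R -> R,
    smooth_on_nonneg alpha /\
    forall X : R, 0 <= X ->
      Derive (fun s => pfun m g gt s X) (alpha X) = 0 /\
      alpha0 m <= alpha X <= alpha1 m.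
Proof.
  intros Hm _ Hg0 Hgt _ _ _ Hslope Hcurvature Hrange.
  destruct (smooth_critical_point m (ghat g gt)) as [alpha [Halpha Hcrit]].
  - lia.
  - apply smooth_ghat, Hgt.
  - intros x; unfold ghat; destruct (Hrange x).
    split; [apply (Rle_div_r _ (gt x)) | apply (Rle_div_l (gt x))]; lra.
  - intros x; rewrite Derive_ghat; destruct (Hslope x).
    replace (x * (Derive gt x / g 0)) with (- (- x * Derive gt x) / g 0) by (field; lra).
    split; [apply (Rlt_div_r _ (- (- x * Derive gt x))) | apply (Rle_div_l (- (- x * Derive gt x)))]; lra.
  - intros x; rewrite Derive_n_ghat.
    replace (x ^ 2 * (Derive_n gt 2 x / g 0)) with (x ^ 2 * Derive_n gt 2 x / g 0)
      by (field; lra).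
    rewrite Rabs_div, (Rabs_pos_eq (g 0)) by lra.
    apply Rlt_div_l; [lra | apply Hcurvature].
  - exists alpha; split.
    + exists 1; split; [lra | intros n x _; apply Halpha].
    + intros X _; exact (Hcrit X).
Qed.
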